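(* Let $B$ be a unital commutative semi-simple Banach algebra with connected maximal ideal space $X$. Let $T$ be a unital endomorphism of $B$ which is a Riesz operator, induced by a selfmap $\phi$ of $X$, and suppose $\{x_0\}=\bigcap_{n=0}^\infty\phi_n(X)$. Then for each $\varepsilon>0$ there exists a positive integer $N$ such that $\phi_N(X)\subset B(x_0,\varepsilon)$.
   Context: The maximal ideal space $X$ of $B$ carries the weak-* (Gelfand) topology, and $\hat f$ denotes the Gelfand transform of $f\in B$. A unital endomorphism $T$ of $B$ is induced by a weak-* continuous selfmap $\phi$ of $X$ if $\widehat{Tf}(x)=\hat f(\phi(x))$ for all $f\in B$, $x\in X$; $\phi_n$ is the $n$-th iterate of $\phi$ ($\phi_0$ the identity). For $x,y\in X$, $\|x-y\|=\sup\{|\hat f(x)-\hat f(y)|: f\in B,\ \|f\|\le 1\}$ (the norm of $x-y$ in the dual $B^*$), and $B(a,\varepsilon)=\{x\in X:\|x-a\|<\varepsilon\}$. A bounded operator $T$ is a Riesz operator if $\lim_{n}\left[\inf\{\|T^n-K\|:K \text{ compact}\}\right]^{1/n}=0$. *)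

From HB Require Import structures.
From mathcomp Require Import all_boot all_order all_algebra.
From mathcomp Require Import all_classical all_reals all_analysis.
From mathcomp.real_closed Require Import complex.
Import numFieldTopology.Exports numFieldNormedType.Exports.
Import Order.TTheory GRing.Theory Num.Theory.

Set Implicit Arguments.
Unset Strict Implicit.
Unset Printing Implicit Defensive.

Local Open Scope ring_scope.
Local Open Scope classical_set_scope.

(* the complex field, packaged as a numFieldType so that the topological and
   normed instances of MathComp-Analysis for numFieldTypes apply *)
Definition Cx (R : realType) : numFieldType := R[i].

Section BanachAlgebraDefs.
Variable R : realType.
Local Notation C := (Cx R).
Variable B : completeNormedModType C.

(* real-valued norm of an element of B ( `|f| is a nonnegative element of C ) *)
Definition rnorm (f : B) : R := Normc.normc `|f|.

Definition unital_comm_banach_algebra (mul : B -> B -> B) (one : B) : Prop :=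
  [/\ (forall f g h, mul f (mul g h) = mul (mul f g) h),
      (forall f g, mul f g = mul g f),
      (forall f, mul one f = f),
      (forall (a : C) f g h, mul (a *: f + g) h = a *: mul f h + mul g h)
    & [/\ (forall f g, rnorm (mul f g) <= rnorm f * rnorm g),
      rnorm one = 1 & one != 0]].

Definition is_ideal (mul : B -> B -> B) (I : set B) : Prop :=
  [/\ I 0, (forall f g, I f -> I g -> I (f + g)) &
      (forall f g, I g -> I (mul f g))].

Definition maximal_ideal (mul : B -> B -> B) (one : B) (I : set B) : Prop :=
  [/\ is_ideal mul I, ~ I one &
      (forall J, is_ideal mul J -> ~ J one -> I `<=` J -> J = I)].

Definition semisimple (mul : B -> B -> B) (one : B) : Prop :=
  forall f, (forall I, maximal_ideal mul one I -> I f) -> f = 0.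

Definition is_character (mul : B -> B -> B) (chi : B -> C) : Prop :=
  [/\ (forall (a : C) f g, chi (a *: f + g) = a * chi f + chi g),
      (forall f g, chi (mul f g) = chi f * chi g) &
      (exists f, chi f != 0)].

(* the maximal ideal space, as a subset of B -> C with the topology of
   pointwise convergence (= the weak-* topology restricted to characters) *)
Definition max_ideal_space (mul : B -> B -> B) : set {ptws B -> C} :=
  [set chi | is_character mul chi].

Definition dual_dist (x y : B -> C) : R :=
  sup [set Normc.normc (x f - y f) | f in [set f : B | rnorm f <= 1]].

Definition is_linear_op (S : B -> B) : Prop :=
  forall (a : C) f g, S (a *: f + g) = a *: S f + S g.

Definition compact_op (K : B -> B) : Prop :=
  is_linear_op K /\ compact (closure (K @` [set f : B | rnorm f <= 1])).

Definition op_norm (S : B -> B) : R :=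
  sup [set rnorm (S f) | f in [set f : B | rnorm f <= 1]].

Definition ess_norm (S : B -> B) : R :=
  inf [set op_norm (fun f => S f - K f) | K in compact_op].

Definition riesz_op (T : B -> B) : Prop :=
  is_linear_op T /\ continuous T /\
  (fun n : nat => ess_norm (iter n T) `^ (n%:R^-1)) @ \oo --> (0 : R).

End BanachAlgebraDefs.

From HB Require Import structures.
From mathcomp Require Import all_boot all_order all_algebra.
From mathcomp Require Import all_classical all_reals all_analysis.
From mathcomp.real_closed Require Import complex.
From mathcomp Require Import ring lra.
Import numFieldTopology.Exports numFieldNormedType.Exports.
Import Order.TTheory GRing.Theory Num.Theory.
Local Open Scope ring_scope.
Local Open Scope classical_set_scope.
Set Implicit Arguments.
Unset Strict Implicit.
Unset Printing Implicit Defensive.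

(* Since T is a Riesz operator, some power T^n lies within d of a compact
   operator K, and K maps the unit ball into finitely many d-balls centred at
   y_1, ..., y_k.  Characters satisfy |chi f| <= ||f|| (otherwise a Neumann
   series inverts an element killed by chi), so by Tychonoff X is weak-*
   compact; hence the nested compact sets phi_m(X), whose intersection is
   {x0}, eventually lie in the weak-* neighbourhood
   {x | |x(y_i) - x0(y_i)| < d for all i}.  For such x and ||f|| <= 1, as
   phi x0 = x0, phi_n(x)(f) - x0(f) = x(T^n f) - x0(T^n f), which splits along
   T^n f - K f, K f - y_i and y_i into terms bounded by 2d, 2d and d. *)

Section RealValuedNorms.
Variables (R : realType) (B : completeNormedModType (Cx R)).
Local Notation C := (Cx R).

Lemma normCE (z : C) : (Normc.normc z)%:C%C = `|z|.
Proof. by []. Qed.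

Lemma normc_ge0 (z : C) : 0 <= Normc.normc z.
Proof. by rewrite -lecR normCE normr_ge0. Qed.

Lemma normc_lt (z : C) (r : R) : (Normc.normc z < r) = (`|z| < r%:C%C).
Proof. by rewrite -ltcR normCE. Qed.

Lemma normc_ltC (z e : C) : 0 < e -> (`|z| < e) = (Normc.normc z < Normc.normc e).
Proof. by move=> e0; rewrite -ltcR !normCE [`|e|]gtr0_norm. Qed.

Lemma normc_real (r : R) : Normc.normc (r%:C%C : C) = `|r|.
Proof. by rewrite /Normc.normc /= expr0n /= addr0 sqrtr_sqr. Qed.

Lemma rnormE (f : B) : (rnorm f)%:C%C = `|f|.
Proof. exact: normr_id. Qed.

Lemma rnorm_ge0 (f : B) : 0 <= rnorm f.
Proof. exact: normc_ge0. Qed.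

Lemma rnorm_lt (f : B) (r : R) : (rnorm f < r) = (`|f| < r%:C%C).
Proof. by rewrite -ltcR rnormE. Qed.

Lemma rnorm_ltC (f : B) (e : C) : 0 < e -> (`|f| < e) = (rnorm f < Normc.normc e).
Proof. by move=> e0; rewrite -ltcR rnormE normCE gtr0_norm. Qed.

Lemma rnormD (f g : B) : rnorm (f + g) <= rnorm f + rnorm g.
Proof. by rewrite -lecR rmorphD /= !rnormE ler_normD. Qed.

Lemma rnormN (f : B) : rnorm (- f) = rnorm f.
Proof. by apply: (@complexI R); rewrite !rnormE normrN. Qed.

Lemma rnorm0 : rnorm (0 : B) = 0.
Proof. by apply: (@complexI R); rewrite !rnormE normr0. Qed.

Lemma rnormZ (a : C) (f : B) : rnorm (a *: f) = Normc.normc a * rnorm f.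
Proof. by apply: (@complexI R); rewrite rmorphM /= (rnormE (a *: f)) rnormE normrZ. Qed.

Lemma cvg_rnormP (u : nat -> B) (l : B) :
  u @ \oo --> l <-> forall e : R, 0 < e -> \forall n \near \oo, rnorm (l - u n) < e.
Proof.
split=> [/cvgrPdist_lt ul e e0|ul].
  by apply: filterS (ul e%:C%C _) => [n|]; rewrite ?rnorm_lt ?ltcR.
apply/cvgrPdist_lt => e e0.
have /ul : 0 < Normc.normc e by rewrite -ltcR normCE normr_gt0 gt_eqF.
by apply: filterS => n; rewrite rnorm_ltC.
Qed.

End RealValuedNorms.

Section NeumannSeries.
Variables (R : realType) (B : completeNormedModType (Cx R)).
Variables (mul : B -> B -> B) (one : B).
Hypothesis hA : unital_comm_banach_algebra mul one.

Lemma bmulC f g : mul f g = mul g f.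
Proof. by case: hA. Qed.

Lemma bmul1 f : mul one f = f.
Proof. by case: hA. Qed.

Lemma bmulZDl (a : Cx R) f g h : mul (a *: f + g) h = a *: mul f h + mul g h.
Proof. by case: hA. Qed.

Lemma rnormM f g : rnorm (mul f g) <= rnorm f * rnorm g.
Proof. by case: hA => _ _ _ _ []. Qed.

Lemma rnorm1 : rnorm one = 1.
Proof. by case: hA => _ _ _ _ []. Qed.

Lemma bmulDl f g h : mul (f + g) h = mul f h + mul g h.
Proof. by rewrite -[f]scale1r bmulZDl !scale1r. Qed.

Lemma bmul0 h : mul 0 h = 0.
Proof. by apply: (addrI (mul 0 h)); rewrite -bmulDl !addr0. Qed.

Lemma bmulBl f g h : mul (f - g) h = mul f h - mul g h.
Proof. by rewrite addrC -scaleN1r bmulZDl scaleN1r addrC. Qed.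

Lemma bmulBr f g h : mul h (f - g) = mul h f - mul h g.
Proof. by rewrite !(bmulC h) bmulBl. Qed.

Lemma bmulDr f g h : mul h (f + g) = mul h f + mul h g.
Proof. by rewrite !(bmulC h) bmulDl. Qed.

Fixpoint bpow (g : B) (n : nat) : B := if n is n'.+1 then mul g (bpow g n') else one.

Fixpoint geom (g : B) (n : nat) : B := if n is n'.+1 then geom g n' + bpow g n' else 0.

Lemma rnorm_bpow g n : rnorm (bpow g n) <= rnorm g ^+ n.
Proof.
elim: n => [|n IH] /=; first by rewrite rnorm1 expr0.
by apply: le_trans (rnormM _ _) _; rewrite exprS ler_wpM2l ?rnorm_ge0.
Qed.

Lemma geom_telescope g n : mul (one - g) (geom g n) = one - bpow g n.
Proof.
elim: n => [|n IH] /=; first by rewrite bmulC bmul0 subrr.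
by rewrite bmulDr IH bmulBl bmul1 addrA subrK.
Qed.

Lemma rnorm_geomB g m d : rnorm g < 1 ->
  rnorm (geom g (m + d) - geom g m) <= rnorm g ^+ m * (1 - rnorm g ^+ d) / (1 - rnorm g).
Proof.
set q := rnorm g => q1; have q1' : 1 - q != 0 by rewrite subr_eq0 gt_eqF.
elim: d => [|d IH]; first by rewrite addn0 subrr rnorm0 expr0 subrr mulr0 mul0r.
rewrite addnS /= addrAC; apply: le_trans (rnormD _ _) _.
have -> : q ^+ m * (1 - q ^+ d.+1) / (1 - q) = q ^+ m * (1 - q ^+ d) / (1 - q) + q ^+ (m + d).
  by rewrite exprD exprS; field.
by apply: lerD => //; apply: rnorm_bpow.
Qed.

Lemma geom_cvg g : rnorm g < 1 -> cvgn (geom g).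
Proof.
set q := rnorm g => q1; have q0 : 0 <= q := rnorm_ge0 g.
have q1' : 0 < 1 - q by rewrite subr_gt0.
apply/cauchy_cvgP/cauchyP => e e0.
have e0' : 0 < Normc.normc e by rewrite -ltcR normCE normr_gt0 gt_eqF.
have /cvgrPdist_lt/(_ _ (mulr_gt0 e0' q1')) : (GRing.exp q : R ^nat) @ \oo --> 0.
  by apply: cvg_expr; rewrite ger0_norm.
move=> [M _ HM]; exists (geom g M), M => // n /= Mn.
rewrite -ball_normE /= -(subnKC Mn) -normrN opprB rnorm_ltC //.
apply: le_lt_trans (rnorm_geomB _ _ q1) _.
have := HM M (leqnn M); rewrite sub0r normrN ger0_norm ?exprn_ge0 // => qM.
rewrite ltr_pdivrMr //; apply: le_lt_trans qM.
by rewrite ler_piMr ?exprn_ge0 // gerBl exprn_ge0.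
Qed.

Lemma bmul_cvg a (u : nat -> B) l :
  u @ \oo --> l -> (fun n => mul a (u n)) @ \oo --> mul a l.
Proof.
move=> /cvg_rnormP ul; apply/cvg_rnormP => e e0.
have a1 : 0 < rnorm a + 1 by rewrite ltr_wpDl ?rnorm_ge0.
apply: filterS (ul _ (divr_gt0 e0 a1)) => n; rewrite ltr_pdivlMr // => hn.
rewrite -bmulBr; apply: le_lt_trans (rnormM _ _) (le_lt_trans _ hn).
by rewrite mulrC ler_wpM2l ?rnorm_ge0 ?lerDl.
Qed.

Lemma neumann_invertible g : rnorm g < 1 -> exists u, mul (one - g) u = one.
Proof.
move=> g1; exists (limn (geom g)).
have geom_lim : (fun n => mul (one - g) (geom g n)) @ \oo --> mul (one - g) (limn (geom g)).
  exact: bmul_cvg (geom_cvg g1).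
have geom_one : (fun n => mul (one - g) (geom g n)) @ \oo --> one.
  apply/cvg_rnormP => e e0.
  have /cvgrPdist_lt/(_ e e0) : (GRing.exp (rnorm g) : R ^nat) @ \oo --> 0.
    by apply: cvg_expr; rewrite ger0_norm ?rnorm_ge0.
  apply: filterS => n; rewrite sub0r normrN ger0_norm ?exprn_ge0 ?rnorm_ge0 // => gn.
  rewrite geom_telescope opprB addrCA subrr addr0.
  exact: le_lt_trans (rnorm_bpow _ _) gn.
exact: cvg_unique _ geom_lim geom_one.
Qed.

End NeumannSeries.

Section Characters.
Variables (R : realType) (B : completeNormedModType (Cx R)).
Variables (mul : B -> B -> B) (one : B).
Hypothesis hA : unital_comm_banach_algebra mul one.
Variable chi : B -> Cx R.
Hypothesis hchi : is_character mul chi.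

Lemma charZD (a : Cx R) f g : chi (a *: f + g) = a * chi f + chi g.
Proof. by case: hchi. Qed.

Lemma charM f g : chi (mul f g) = chi f * chi g.
Proof. by case: hchi. Qed.

Lemma charD f g : chi (f + g) = chi f + chi g.
Proof. by rewrite -[f in LHS]scale1r charZD mul1r. Qed.

Lemma charZ (a : Cx R) f : chi (a *: f) = a * chi f.
Proof.
have chi0 : chi 0 = 0 by apply: (addrI (chi 0)); rewrite -charD !addr0.
by rewrite -[a *: f]addr0 charZD chi0 addr0.
Qed.

Lemma charB f g : chi (f - g) = chi f - chi g.
Proof. by rewrite charD -scaleN1r charZ mulN1r. Qed.

Lemma char1 : chi one = 1.
Proof.
case: hchi => _ _ [f f0]; apply: (mulIf f0).
by rewrite -charM bmul1 ?mul1r.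
Qed.

Lemma normc_char_le f : Normc.normc (chi f) <= rnorm f.
Proof.
rewrite leNgt; apply/negP => f_lt.
have nchi0 : 0 < Normc.normc (chi f) := le_lt_trans (rnorm_ge0 f) f_lt.
have chi0 : chi f != 0 by apply: contraTneq nchi0 => ->; rewrite Normc.normc0 ltxx.
pose h := (chi f)^-1 *: f.
have h_lt1 : rnorm h < 1.
  by rewrite rnormZ Normc.normcV mulrC ltr_pdivrMr // mul1r.
have [u hu] := neumann_invertible hA h_lt1.
have := charM (one - h) u; rewrite hu char1 charB char1 charZ mulVf // subrr mul0r.
exact/eqP/oner_neq0.
Qed.

End Characters.

Section ComplexDisc.
Variable R : realType.
Local Notation C := (Cx R).

Lemma normc_complex_le (x y : R) : Normc.normc (Complex x y : C) <= `|x| + `|y|.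
Proof.
rewrite /Normc.normc /= -[X in _ <= X]ger0_norm ?addr_ge0 // -sqrtr_sqr.
rewrite ler_sqrt ?sqr_ge0 // sqrrD -[x ^+ 2]real_normK ?num_real //.
by rewrite -[y ^+ 2]real_normK ?num_real // -addrA lerD2l lerDr mulrn_wge0 ?mulr_ge0.
Qed.

Lemma normc_ge_Re_Im (z : C) :
  `|complex.Re z| <= Normc.normc z /\ `|complex.Im z| <= Normc.normc z.
Proof.
case: z => x y; rewrite /Normc.normc /= -!sqrtr_sqr.
by rewrite !ler_sqrt ?addr_ge0 ?sqr_ge0 // lerDl lerDr !sqr_ge0.
Qed.

Lemma continuous_complex_of_pair : continuous (fun p : R * R => Complex p.1 p.2 : C).
Proof.
move=> [a b]; apply/cvgrPdist_lt => e e0.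
have e2 : 0 < Normc.normc e / 2 by rewrite divr_gt0 // -ltcR normCE normr_gt0 gt_eqF.
have near_a : \forall q \near (a, b), `|a - q.1| < Normc.normc e / 2.
  have : (fun q : R * R => q.1) @ nbhs (a, b) --> a by exact: cvg_fst.
  by move=> /cvgrPdist_lt /(_ _ e2).
have near_b : \forall q \near (a, b), `|b - q.2| < Normc.normc e / 2.
  have : (fun q : R * R => q.2) @ nbhs (a, b) --> b by exact: cvg_snd.
  by move=> /cvgrPdist_lt /(_ _ e2).
apply: filterS2 near_a near_b => q qa qb.
rewrite normc_ltC //.
apply: le_lt_trans (normc_complex_le (a - q.1) (b - q.2)) _.
by rewrite [X in _ < X](splitr (Normc.normc e)) ltrD.
Qed.

Lemma compact_closed_ballC (rho : C) : compact (closed_ball (0 : C) rho).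
Proof.
pose r := Normc.normc rho + 1.
have square_compact : compact (`[- r, r] `*` `[- r, r] : set (R * R)).
  by apply: compact_setX; exact: segment_compact.
apply: (subclosed_compact _ (continuous_compact _ square_compact)).
- exact: closed_ball_closed.
- exact/continuous_subspaceT/continuous_complex_of_pair.
move=> z zrho.
have [w [rho_w z_w]] : exists w, ball (0 : C) rho w /\ ball z 1 w.
  by have [w [? ?]] := zrho _ (nbhsx_ballx z 1 ltr01); exists w.
move: rho_w z_w; rewrite -!ball_normE /= sub0r normrN => rho_w z_w.
have z_le : Normc.normc z <= r.
  rewrite -[z](subrK w) /r addrC; apply: le_trans (le_normcD _ _) _.
  apply: lerD; apply/ltW; rewrite -ltcR !normCE ?[`|rho|]gtr0_norm //.
  exact: le_lt_trans (normr_ge0 _) rho_w.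
exists (complex.Re z, complex.Im z); last by case: z {zrho z_w z_le}.
by split; rewrite /= in_itv /= -ler_norml; apply: le_trans z_le; case: (normc_ge_Re_Im z).
Qed.

End ComplexDisc.

Section MaximalIdealSpace.
Variables (R : realType) (B : completeNormedModType (Cx R)).
Variables (mul : B -> B -> B) (one : B).
Hypothesis hA : unital_comm_banach_algebra mul one.
Local Notation C := (Cx R).
Local Notation PT := {ptws B -> C}.

Lemma continuous_eval (f : B) : continuous (fun chi : PT => chi f).
Proof. exact: (@proj_continuous B (fun _ => C) f). Qed.

Lemma closed_eq_fun (E1 E2 : PT -> C) :
  continuous E1 -> continuous E2 -> closed [set chi | E1 chi = E2 chi].
Proof.
move=> c1 c2; have -> : [set chi | E1 chi = E2 chi] = (E1 \- E2) @^-1` [set 0].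
  apply/seteqP; split => chi /=; first by move=> ->; rewrite subrr.
  by move/eqP; rewrite subr_eq0 => /eqP.
apply: preimage_closed => [chi _|]; first by apply: continuousB; [exact: c1 | exact: c2].
exact/accessible_closed_set1/hausdorff_accessible/norm_hausdorff.
Qed.

Definition character_eqs : set PT :=
  \bigcap_(t in [set: C * B * B])
    [set chi : PT | chi (t.1.1 *: t.1.2 + t.2) = t.1.1 * chi t.1.2 + chi t.2]
  `&` \bigcap_(t in [set: B * B]) [set chi : PT | chi (mul t.1 t.2) = chi t.1 * chi t.2]
  `&` [set chi : PT | chi one = 1].

Lemma closed_character_eqs : closed character_eqs.
Proof.
apply: closedI; first apply: closedI.
- apply: closed_bigI => -[[a f] g] _; apply: closed_eq_fun => [|chi]; first exact: continuous_eval.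
  apply: (@continuousD _ _ _ (fun chi : PT => a * chi f)); last exact: continuous_eval.
  by apply: (@continuousM _ _ (fun=> a)); [exact: cst_continuous | exact: continuous_eval].
- apply: closed_bigI => -[f g] _; apply: closed_eq_fun => [|chi]; first exact: continuous_eval.
  by apply: continuousM; exact: continuous_eval.
- by apply: closed_eq_fun; [exact: continuous_eval | exact: cst_continuous].
Qed.

(* [closed_ball] is the closure of the open ball, so radius [rnorm f] would give
   the empty set for [f = 0]. *)
Lemma max_ideal_spaceE : max_ideal_space mul =
  [set chi : PT | forall f, closed_ball (0 : C) (rnorm f + 1)%:C%C (chi f)] `&` character_eqs.
Proof.
apply/seteqP; split => chi.
- move=> hchi; split; [|split; [split|]].
  + move=> f; apply: subset_closure; rewrite -ball_normE /= sub0r normrN -normc_lt.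
    by apply: le_lt_trans (normc_char_le hA hchi f) _; rewrite ltrDl.
  + by move=> t _ /=; rewrite (charZD hchi).
  + by move=> t _ /=; rewrite (charM hchi).
  + exact: (char1 hA hchi).
- move=> [_ [[lin_chi mul_chi] chi1]]; split.
  + by move=> a f g; exact: (lin_chi (a, f, g)).
  + by move=> f g; exact: (mul_chi (f, g)).
  + by exists one; rewrite chi1 oner_neq0.
Qed.

Lemma compact_max_ideal_space : compact (max_ideal_space mul).
Proof.
rewrite max_ideal_spaceE; apply: compact_closedI; last exact: closed_character_eqs.
have := @tychonoff B (fun _ => C) (fun f => closed_ball (0 : C) (rnorm f + 1)%:C%C).
by apply; move=> f; exact: compact_closed_ballC.
Qed.

End MaximalIdealSpace.

Lemma nested_compact_shrink (T : topologicalType) (K : nat -> set T) (x0 : T) (U : set T) :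
  hausdorff_space T -> (forall n, compact (K n)) ->
  (forall m n, (m <= n)%N -> K n `<=` K m) ->
  \bigcap_(n in [set: nat]) K n = [set x0] -> nbhs x0 U -> exists n, K n `<=` U.
Proof.
move=> hT cK decrK capK Ux0; apply: contrapT => /forallNP notKU.
pose G n := K n `\` U.
have GF : Filter (filter_from [set: nat] G).
  apply: filter_from_filter => [|i j _ _]; first by exists 0%N.
  exists (maxn i j) => // z [Kz nUz].
  by split; split => //; apply: decrK Kz; rewrite ?leq_maxl ?leq_maxr.
have GPF : ProperFilter (filter_from [set: nat] G).
  apply: filter_from_proper => n _.
  by have /existsNP [z /not_implyP [Kz nUz]] := notKU n; exists z.
have [p [_ p_cluster]] := cK 0%N _ GPF (ex_intro2 _ _ 0%N I (fun z => @proj1 _ _)).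
have p_in n : K n p.
  apply: (compact_closed hT (cK n)) => W Wp.
  by have [|z [[Kz _] Wz]] := p_cluster (G n) W _ Wp; [exists n | exists z].
have Up : nbhs p U.
  have : (\bigcap_(n in [set: nat]) K n) p by move=> n _; exact: p_in.
  by rewrite capK => ->.
by have [|z [[_ nUz] Uz]] := p_cluster (G 0%N) U _ Up; first exists 0%N.
Qed.

Section IteratedImages.
Variables (T : topologicalType) (X : set T) (phi : T -> T) (x0 : T).
Hypotheses (phiX : phi @` X `<=` X) (phi_cont : {within X, continuous phi}).
Hypothesis cap_iter : \bigcap_(n in [set: nat]) (iter n phi @` X) = [set x0].

Lemma iter_mapsto n x : X x -> X (iter n phi x).
Proof. by elim: n => //= n IH Xx; apply: phiX; exists (iter n phi x); first exact: IH. Qed.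

Lemma iter_image_decr m n : (m <= n)%N -> iter n phi @` X `<=` iter m phi @` X.
Proof.
move=> mn _ [x Xx <-]; exists (iter (n - m) phi x); first exact: iter_mapsto.
by rewrite -iterD subnKC.
Qed.

Lemma fixpoint_cap_iter : X x0 /\ phi x0 = x0.
Proof.
have cap_x0 n : (iter n phi @` X) x0.
  by have : [set x0] x0 by []; rewrite -cap_iter; apply.
split; first by have [x Xx <-] := cap_x0 0%N.
have : (\bigcap_(n in [set: nat]) (iter n phi @` X)) (phi x0).
  move=> n _; have [x Xx <-] := cap_x0 n.
  by exists (phi x); [apply: phiX; exists x | rewrite -iterSr].
by rewrite cap_iter.
Qed.

Lemma iter_image_shrink (U : set T) : hausdorff_space T -> compact X ->
  nbhs x0 U -> exists n, iter n phi @` X `<=` U.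
Proof.
move=> hT cX; apply: nested_compact_shrink hT _ iter_image_decr cap_iter => n.
elim: n => [|n IH]; first by rewrite image_id.
rewrite (_ : iter n.+1 phi @` X = phi @` (iter n phi @` X)); last by rewrite image_comp.
apply: continuous_compact IH.
by apply: continuous_subspaceW phi_cont => _ [x Xx <-]; exact: iter_mapsto.
Qed.

End IteratedImages.

Section RieszApproximation.
Variables (R : realType) (B : completeNormedModType (Cx R)).
Local Notation C := (Cx R).

Lemma linear_op0 (S : B -> B) : is_linear_op S -> S 0 = 0.
Proof.
move=> linS; have := linS 1 0 0; rewrite !scale1r !addr0 => S00.
by apply: (addrI (S 0)); rewrite -S00 addr0.
Qed.

Lemma linear_opZ (S : B -> B) (a : C) f : is_linear_op S -> S (a *: f) = a *: S f.
Proof. by move=> linS; rewrite -[a *: f]addr0 linS linear_op0 // addr0. Qed.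

Lemma iter_linear_op (S : B -> B) n : is_linear_op S -> is_linear_op (iter n S).
Proof. by move=> linS; elim: n => [|n IH] a f g //=; rewrite IH linS. Qed.

Lemma iter_continuous (S : B -> B) n : continuous S -> continuous (iter n S).
Proof.
move=> cS; elim: n => [|n IH] f /=; first exact: cvg_id.
exact: continuous_comp (IH f) (cS _).
Qed.

Lemma linear_op_bounded (S : B -> B) : is_linear_op S -> continuous S ->
  exists M, forall f, rnorm f <= 1 -> rnorm (S f) <= M.
Proof.
move=> linS cS; have /cvgrPdist_lt/(_ 1 ltr01)/nbhs_normP [r /= r0 Sr] := cS 0.
pose c := Normc.normc r / 2.
have c0 : 0 < c by rewrite divr_gt0 // -ltcR normCE normr_gt0 gt_eqF.
exists c^-1 => f f1; rewrite -(ler_pM2l c0) mulfV ?gt_eqF //.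
have /Sr : `|0 - c%:C%C *: f| < r.
  rewrite sub0r normrN rnorm_ltC // rnormZ normc_real gtr0_norm //.
  apply: le_lt_trans (ler_piMr (ltW c0) f1) _.
  by rewrite /c ltr_pdivrMr // ltr_pMr ?ltr1n // -ltcR normCE normr_gt0 gt_eqF.
rewrite linear_op0 // sub0r normrN linear_opZ // -[1 : C]/((1 : R)%:C%C) -rnorm_lt.
by rewrite rnormZ normc_real gtr0_norm // => /ltW.
Qed.

Lemma compact_finite_net (A : set B) (r : R) : compact A -> 0 < r ->
  exists s : seq B, forall a, A a -> exists2 y, y \in s & rnorm (a - y) < r.
Proof.
rewrite compact_cover => cA r0.
have [a Aa|D _ cov] := cA B A (fun y => ball y r%:C%C) (fun y _ => ball_open y _).
  by exists a => //; apply: ballxx; rewrite ltcR.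
exists (finmap.enum_fset D) => a /cov [y /= yD ay]; exists y => //.
by move: ay; rewrite -ball_normE /= -normrN opprB -rnorm_lt.
Qed.

Lemma compact_rnorm_bounded (A : set B) : compact A -> exists M, forall a, A a -> rnorm a <= M.
Proof.
move=> cA; have [s net] := compact_finite_net cA ltr01.
exists (1 + \sum_(y <- s) rnorm y) => a /net [y ys ay].
rewrite -[a](subrK y); apply: le_trans (rnormD _ _) (lerD (ltW ay) _).
rewrite (big_rem y ys) /= lerDl sumr_ge0 // => z _; exact: rnorm_ge0.
Qed.

Lemma riesz_ess_norm_small (T : B -> B) (d : R) : riesz_op T -> 0 < d ->
  exists n, ess_norm (iter n T) < d.
Proof.
move=> [_ [_ ess_cvg]] d0; pose eta := Num.min d (1 / 2).
have eta0 : 0 < eta by rewrite lt_min d0 divr_gt0.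
have eta_d : eta <= d by rewrite ge_min lexx.
have eta_half : eta <= 1 / 2 by rewrite ge_min lexx orbT.
have [N _ HN] := (cvgrPdist_lt _ _).1 ess_cvg eta eta0.
exists N.+1; set e := ess_norm (iter N.+1 T).
have [e0|e0] := lerP e 0; first exact: le_lt_trans e0 d0.
have := HN N.+1 (leqnSn N); rewrite sub0r normrN -/e.
set y := e `^ N.+1%:R^-1; rewrite ger0_norm ?powR_ge0 // => y_eta.
have -> : e = y ^+ N.+1.
  by rewrite -powR_mulrn ?powR_ge0 // -powRrM mulVf ?pnatr_eq0 // powRr1 // ltW.
have y1 : y <= 1 by lra.
apply: le_lt_trans (lt_le_trans y_eta eta_d).
by rewrite exprS ler_piMr ?powR_ge0 // exprn_ile1 ?powR_ge0.
Qed.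

Lemma compact_op0 : compact_op (fun _ : B => 0).
Proof.
split=> [a f g|]; first by rewrite scaler0 addr0.
have -> : (fun _ : B => 0 : B) @` [set f : B | rnorm f <= 1] = [set 0].
  by apply/seteqP; split => [_ [f _ <-] //|_ ->]; exists 0; rewrite //= rnorm0 ler01.
rewrite -(closure_id _).1; first exact: compact_set1.
exact/accessible_closed_set1/hausdorff_accessible/norm_hausdorff.
Qed.

Lemma riesz_compact_approx (T : B -> B) (d : R) : riesz_op T -> 0 < d ->
  exists n K, compact_op K /\ forall f, rnorm f <= 1 -> rnorm (iter n T f - K f) < d.
Proof.
move=> rT d0; have [n ess_lt] := riesz_ess_norm_small rT d0.
have [_ [K cK <-] op_lt] :
    exists2 x, [set op_norm (fun f => iter n T f - K f) | K in @compact_op R B] x & x < d.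
  apply: inf_lt ess_lt; exists (op_norm (fun f => iter n T f - 0)), (fun=> 0) => //.
  exact: compact_op0.
exists n, K; split => // f f1; apply: le_lt_trans op_lt; apply: ub_le_sup; last by exists f.
have [MT HMT] := linear_op_bounded (iter_linear_op n rT.1) (iter_continuous (n:=n) rT.2.1).
have [MK HMK] := compact_rnorm_bounded cK.2.
exists (MT + MK) => _ [g g1 <-]; apply: le_trans (rnormD _ _) _.
by rewrite rnormN lerD ?HMT // HMK //; apply: subset_closure; exists g.
Qed.

End RieszApproximation.

Section DualDistance.
Variables (R : realType) (B : completeNormedModType (Cx R)).
Variables (mul : B -> B -> B) (one : B).
Hypothesis hA : unital_comm_banach_algebra mul one.
Local Notation C := (Cx R).
Local Notation PT := {ptws B -> C}.

Lemma dual_dist_le (x y : B -> C) (r : R) :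
  (forall f, rnorm f <= 1 -> Normc.normc (x f - y f) <= r) -> dual_dist x y <= r.
Proof.
move=> xy; apply: ge_sup => [|_ [f f1 <-]]; last exact: xy.
by exists (Normc.normc (x 0 - y 0)), 0; rewrite //= rnorm0 ler01.
Qed.

Lemma normc_charB_le (chi chi' : B -> C) f : is_character mul chi -> is_character mul chi' ->
  Normc.normc (chi f - chi' f) <= rnorm f + rnorm f.
Proof.
move=> hchi hchi'; apply: le_trans (le_normcD _ _) _.
by rewrite normcN lerD // (normc_char_le hA).
Qed.

Lemma nbhs_agree_on_seq (x0 : PT) (s : seq B) (d : R) : 0 < d ->
  nbhs x0 [set z : PT | forall y, y \in s -> Normc.normc (z y - x0 y) < d].
Proof.
move=> d0; elim: s => [|a s IH]; first by apply: filterS filterT => z _ y.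
have : (fun z : PT => z a) @ x0 --> x0 a by exact: continuous_eval.
move=> /cvgrPdist_lt/(_ d%:C%C); rewrite ltcR => /(_ d0).
apply: filterS2 IH => z zs za y; rewrite in_cons => /predU1P [->|/zs //].
by rewrite normc_lt distrC.
Qed.

(* [chi - chi'] costs [2 d] on [S f - K f], [2 d] on [K f - y] and [d] on [y]. *)
Lemma char_dist_compact_approx (chi chi' : B -> C) (S K : B -> B) (s : seq B) (d : R) :
  is_character mul chi -> is_character mul chi' ->
  (forall f, rnorm f <= 1 -> rnorm (S f - K f) < d) ->
  (forall a, closure (K @` [set f | rnorm f <= 1]) a -> exists2 y, y \in s & rnorm (a - y) < d) ->
  (forall y, y \in s -> Normc.normc (chi y - chi' y) < d) ->
  forall f, rnorm f <= 1 -> Normc.normc (chi (S f) - chi' (S f)) <= 5%:R * d.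
Proof.
move=> hchi hchi' SK net close f f1.
have [y ys Kfy] := net (K f) (subset_closure (ex_intro2 _ _ f f1 erefl)).
have -> : chi (S f) - chi' (S f) = (chi (S f - K f) - chi' (S f - K f))
    + (chi (K f - y) - chi' (K f - y)) + (chi y - chi' y).
  by rewrite !(charB hchi) !(charB hchi'); ring.
have SKf := SK f f1; have closey := close y ys.
have bound1 := normc_charB_le (S f - K f) hchi hchi'.
have bound2 := normc_charB_le (K f - y) hchi hchi'.
have tri1 := le_normcD (chi (S f - K f) - chi' (S f - K f)) (chi (K f - y) - chi' (K f - y)).
have tri2 := le_normcD (chi (S f - K f) - chi' (S f - K f) + (chi (K f - y) - chi' (K f - y)))
  (chi y - chi' y).
lra.
Qed.

End DualDistance.

Lemma iter_induced (R : realType) (B : completeNormedModType (Cx R)) (mul : B -> B -> B)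
  (T : B -> B) (phi : {ptws B -> Cx R} -> {ptws B -> Cx R}) n f x :
  phi @` max_ideal_space mul `<=` max_ideal_space mul ->
  (forall f x, max_ideal_space mul x -> x (T f) = phi x f) ->
  max_ideal_space mul x -> x (iter n T f) = iter n phi x f.
Proof.
move=> phiX T_phi; elim: n f x => [//|n IH] f x Xx /=.
by rewrite T_phi ?IH -?iterSr //; apply: phiX; exists x.
Qed.

Unset Implicit Arguments.
Theorem theorem1p2 (R : realType) (B : completeNormedModType (Cx R))
  (mul : B -> B -> B) (one : B)
  (T : B -> B) (phi : {ptws B -> (Cx R)} -> {ptws B -> (Cx R)})
  (x0 : {ptws B -> (Cx R)}) :
  unital_comm_banach_algebra mul one ->
  semisimple mul one ->
  connected (max_ideal_space mul) ->
  (* T is a unital endomorphism of B *)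
  is_linear_op T ->
  (forall f g, T (mul f g) = mul (T f) (T g)) ->
  T one = one ->
  (* T is a Riesz operator *)
  riesz_op T ->
  (* T is induced by the weak-* continuous selfmap phi of X *)
  phi @` max_ideal_space mul `<=` max_ideal_space mul ->
  {within max_ideal_space mul, continuous phi} ->
  (forall f x, max_ideal_space mul x -> x (T f) = phi x f) ->
  \bigcap_(n in [set: nat]) (iter n phi @` max_ideal_space mul) = [set x0] ->
  forall eps : R, 0 < eps ->
  exists N : nat, (0 < N)%N /\
    iter N phi @` max_ideal_space mul `<=`
      [set x | max_ideal_space mul x /\ dual_dist x x0 < eps].
Proof.
move=> hA _ _ _ _ _ rT phiX phi_cont T_phi cap_iter eps eps0.
have [x0X phi_x0] := fixpoint_cap_iter phiX cap_iter.
have d0 : 0 < eps / 6 by rewrite divr_gt0.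
have [n [K [cK TK]]] := riesz_compact_approx rT d0.
have [s net] := compact_finite_net cK.2 d0.
have [M shrinkM] := iter_image_shrink phiX phi_cont cap_iter
  (hausdorff_product (fun _ => @norm_hausdorff _ _)) (compact_max_ideal_space hA)
  (nbhs_agree_on_seq x0 s d0).
exists (n + M.+1)%N; split; first by rewrite addnS.
move=> _ [x Xx <-]; split; first exact: iter_mapsto.
have Xw : max_ideal_space mul (iter M.+1 phi x) by exact: iter_mapsto.
have w_close := shrinkM _ (iter_image_decr phiX (leqnSn M) (ex_intro2 _ _ x Xx erefl)).
rewrite iterD; apply: le_lt_trans (dual_dist_le (r := 5%:R * (eps / 6)) _) _; last lra.
move=> f f1; rewrite -(iter_induced n f phiX T_phi Xw) -(iter_fix n phi_x0).
rewrite -(iter_induced n f phiX T_phi x0X).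
exact: (char_dist_compact_approx hA (chi := iter M.+1 phi x) (chi' := x0) Xw x0X TK net w_close f1).
Qed.
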